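(* Let $m>1$ be odd and let $\varphi:\mathbb{Z}_{2m}\to\{\pm1\}$ be a binary sequence of length $2m$. Define the binary $(2,m)$-array $\phi:\mathbb{Z}_2\times\mathbb{Z}_m\to\{\pm1\}$ as follows, where $a\in\{0,1\}$, $k$ is taken as an integer in $\{0,1,\ldots,m-1\}$, and arguments of $\varphi$ are read modulo $2m$. If $m\equiv 1 \pmod 4$: $\phi(a,k)=\varphi(k+am)$ if $k\equiv 0\pmod 4$; $\phi(a,k)=(-1)^{1-a}\varphi(k+(1-a)m)$ if $k\equiv 1\pmod 4$; $\phi(a,k)=-\varphi(k+am)$ if $k\equiv 2\pmod 4$; $\phi(a,k)=(-1)^{a}\varphi(k+(1-a)m)$ if $k\equiv 3\pmod 4$. If $m\equiv 3 \pmod 4$: $\phi(a,k)=(-1)^a\varphi(k+am)$ if $k\equiv 0\pmod 4$; $\phi(a,k)=\varphi(k+(1-a)m)$ if $k\equiv 1\pmod 4$; $\phi(a,k)=(-1)^{1-a}\varphi(k+am)$ if $k\equiv 2\pmod 4$; $\phi(a,k)=-\varphi(k+(1-a)m)$ if $k\equiv 3\pmod 4$. Then $\varphi$ is a GOBS if and only if $\phi$ is a GOBA$(2,m)$ of type $(1,0)$.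
   Context: For a finite abelian group $A$ (written additively) and a map $\psi:A\to\mathbb{C}$, the periodic autocorrelation is $R_\psi(x)=\sum_{b\in A}\psi(b)\overline{\psi(x+b)}$ for $x\in A$. Let $m$ be odd. A binary $(2,m)$-array is a map $\phi:\mathbb{Z}_2\times\mathbb{Z}_m\to\{\pm1\}$. Its expansion (with respect to type $(1,0)$) is $\phi':\mathbb{Z}_4\times\mathbb{Z}_m\to\{\pm1\}$ given by $\phi'(a,k)=\phi(a \bmod 2,k)$ for $a\in\{0,1\}$ and $\phi'(a,k)=-\phi(a\bmod 2,k)$ for $a\in\{2,3\}$. The array $\phi$ is a GOBA$(2,m)$ of type $(1,0)$ if $R_{\phi'}(x)\in\{0,4,-4\}$ for all $x\in(\mathbb{Z}_4\times\mathbb{Z}_m)\setminus\{(0,0),(2,0)\}$ and exactly $2m$ elements $x\in\mathbb{Z}_4\times\mathbb{Z}_m$ satisfy $R_{\phi'}(x)=0$. For a binary sequence $\varphi:\mathbb{Z}_{2m}\to\{\pm1\}$, its expansion is $\varphi':\mathbb{Z}_{4m}\to\{\pm1\}$ with $\varphi'(x)=\varphi(x\bmod 2m)$ for $x\in\{0,\ldots,2m-1\}$ and $\varphi'(x)=-\varphi(x\bmod 2m)$ for $x\in\{2m,\ldots,4m-1\}$. The sequence $\varphi$ is a GOBS (generalized optimal binary sequence) if $R_{\varphi'}(x)\in\{0,4,-4\}$ for all $x\in\mathbb{Z}_{4m}\setminus\{0,2m\}$ and exactly $2m$ elements $x\in\mathbb{Z}_{4m}$ satisfy $R_{\varphi'}(x)=0$.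 *)

(* Values of binary sequences/arrays are taken in int (+1/-1);
   complex conjugation is the identity on such real values. *)
From mathcomp Require Import all_boot all_order all_algebra.
Set Implicit Arguments. Unset Strict Implicit. Unset Printing Implicit Defensive.
Import Order.TTheory GRing.Theory Num.Theory.
Local Open Scope ring_scope.

Definition pm1 (z : int) : bool := (z == 1) || (z == -1).

(* ---------- sequences: varphi : Z_{2m} -> {+-1}, represented by nat -> int,
   only the values at 0..2m-1 matter (arguments are always reduced mod 2m). *)
Definition binary_seq (m : nat) (phi : nat -> int) : Prop :=
  forall x : nat, (x < 2 * m)%N -> pm1 (phi x).

Definition seq_expand (m : nat) (phi : nat -> int) (x : nat) : int :=
  let y := (x %% (4 * m))%N in
  if (y < 2 * m)%N then phi y else - phi (y - 2 * m)%N.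

Definition seq_autocorr (m : nat) (psi : nat -> int) (x : nat) : int :=
  \sum_(b < 4 * m) psi b * psi ((x + b) %% (4 * m))%N.

Definition in_0_pm4 (z : int) : bool := [|| z == 0, z == 4 | z == -4].

Definition is_GOBS (m : nat) (phi : nat -> int) : Prop :=
  binary_seq m phi /\
  let R := seq_autocorr m (seq_expand m phi) in
  (forall x : 'I_(4 * m), (x != 0 :> nat) -> (x != 2 * m :> nat) -> in_0_pm4 (R x))
  /\ #|[set x : 'I_(4 * m) | R x == 0]| = (2 * m)%N.

(* ---------- arrays: phi : Z_2 x Z_m -> {+-1}, represented by nat -> nat -> int,
   only the values at a < 2, k < m matter. *)
Definition binary_arr (m : nat) (phi : nat -> nat -> int) : Prop :=
  forall a k : nat, (a < 2)%N -> (k < m)%N -> pm1 (phi a k).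

Definition arr_expand (m : nat) (phi : nat -> nat -> int) (a k : nat) : int :=
  let a' := (a %% 4)%N in let k' := (k %% m)%N in
  if (a' < 2)%N then phi a' k' else - phi (a' - 2)%N k'.

Definition arr_autocorr (m : nat) (psi : nat -> nat -> int) (x1 x2 : nat) : int :=
  \sum_(b1 < 4) \sum_(b2 < m) psi b1 b2 * psi ((x1 + b1) %% 4)%N ((x2 + b2) %% m)%N.

Definition is_GOBA_10 (m : nat) (phi : nat -> nat -> int) : Prop :=
  binary_arr m phi /\
  let R := arr_autocorr m (arr_expand m phi) in
  (forall (x1 : 'I_4) (x2 : 'I_m),
      ~ ((x1 == 0 :> nat) && (x2 == 0 :> nat)) ->
      ~ ((x1 == 2 :> nat) && (x2 == 0 :> nat)) ->
      in_0_pm4 (R x1 x2))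
  /\ #|[set x : 'I_4 * 'I_m | R x.1 x.2 == 0]| = (2 * m)%N.

Definition arr_of_seq (m : nat) (phi : nat -> int) (a k : nat) : int :=
  let f (i : nat) := phi (i %% (2 * m))%N in
  let s (e : nat) : int := (-1) ^+ e in
  if (m %% 4 == 1)%N then
    match (k %% 4)%N with
    | 0 => f (k + a * m)%N
    | 1 => s (1 - a)%N * f (k + (1 - a) * m)%N
    | 2 => - f (k + a * m)%N
    | _ => s a * f (k + (1 - a) * m)%N
    end
  else
    match (k %% 4)%N with
    | 0 => s a * f (k + a * m)%N
    | 1 => f (k + (1 - a) * m)%N
    | 2 => s (1 - a)%N * f (k + a * m)%N
    | _ => - f (k + (1 - a) * m)%N
    end.

(* Since [m] is odd, [x |-> (x mod 4, x mod m)] identifies Z_(4m) with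
   Z_4 x Z_m, and the array is designed so that its expansion, read along this
   identification, is the expansion of the sequence.  The diagonal identity is
   checked on [x < 2m] (one case per clause of the definition) and extended by
   the sign change under [x |-> x + 2m], which both expansions share because
   [2m = 2 mod 4] and [2m = 0 mod m].  Reindexing the autocorrelation sums along
   the identification then matches the two autocorrelations point by point,
   with the exceptional shifts [(0,0)], [(2,0)] corresponding to [0], [2m]. *)

From mathcomp Require Import all_boot all_order all_algebra zify.
Set Implicit Arguments. Unset Strict Implicit. Unset Printing Implicit Defensive.
Import Order.TTheory GRing.Theory Num.Theory.
Local Open Scope ring_scope.

Lemma pm1N (z : int) : pm1 z -> pm1 (- z).
Proof. by rewrite /pm1 => /orP[] /eqP ->; rewrite ?opprK eqxx ?orbT. Qed.

Lemma pm1_signM (e : nat) (z : int) : pm1 z -> pm1 ((-1) ^+ e * z).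
Proof. by move=> hz; rewrite -signr_odd; case: (odd e); rewrite ?mul1r ?mulN1r ?pm1N. Qed.

Lemma arr_expand_modn (m : nat) (A : nat -> nat -> int) (a k : nat) :
  arr_expand m A (a %% 4) (k %% m) = arr_expand m A a k.
Proof. by rewrite /arr_expand !modn_mod. Qed.

Lemma arr_expand_add2 (m : nat) (A : nat -> nat -> int) (a k : nat) :
  arr_expand m A (a + 2) k = - arr_expand m A a k.
Proof.
rewrite /arr_expand; have : (a %% 4 < 4)%N by rewrite ltn_mod.
rewrite -modnDml; case: (a %% 4)%N => [|[|[|[|//]]]] _ //=; by rewrite opprK.
Qed.

Lemma modn_modMr (x d n : nat) : (x %% (d * n) = x %[mod d])%N.
Proof. exact/modn_dvdm/dvdn_mulr. Qed.

Lemma modn_modMl (x d n : nat) : (x %% (n * d) = x %[mod d])%N.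
Proof. exact/modn_dvdm/dvdn_mull. Qed.

Section OddLength.
Variable m : nat.
Hypothesis m_odd : odd m.

Let m_gt0 : (0 < m)%N. Proof. by case: m m_odd. Qed.

Lemma arr_expand_diag_mod (A : nat -> nat -> int) (x : nat) :
  arr_expand m A (x %% (4 * m)) (x %% (4 * m)) = arr_expand m A x x.
Proof.
by rewrite -arr_expand_modn modn_modMr modn_modMl arr_expand_modn.
Qed.

Lemma arr_expand_diag_add2m (A : nat -> nat -> int) (x : nat) :
  arr_expand m A (x + 2 * m) (x + 2 * m) = - arr_expand m A x x.
Proof.
have m4 : (2 * m = 2 %[mod 4])%N by have := modn2 m; rewrite m_odd; lia.
have e4 : ((x + 2 * m) %% 4 = (x + 2) %% 4)%N by rewrite -modnDmr m4 modnDmr.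
have em : ((x + 2 * m) %% m = x %% m)%N by rewrite addnC modnMDl.
by rewrite -arr_expand_modn e4 em arr_expand_modn arr_expand_add2.
Qed.

Lemma arr_of_seq_diag_small (phi : nat -> int) (x : nat) : (x < 2 * m)%N ->
  arr_expand m (arr_of_seq m phi) x x = phi x.
Proof.
move=> lt_x2m; have lt_km : (x %% m < m)%N by rewrite ltn_pmod.
have lt_j2 : (x %/ m < 2)%N by rewrite ltn_divLR // mulnC.
rewrite (divn_eq x m) {lt_x2m}; move: (x %/ m)%N (x %% m)%N lt_j2 lt_km => j k lt_j2 lt_km.
have m4 : (m %% 4 = 1 \/ m %% 4 = 3)%N by have := modn2 m; rewrite m_odd; lia.
have k4 : (k %% 4 = 0 \/ k %% 4 = 1 \/ k %% 4 = 2 \/ k %% 4 = 3)%N by lia.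
have k2m : (k %% (2 * m) = k)%N by rewrite modn_small //; lia.
have km2m : ((k + m) %% (2 * m) = k + m)%N by rewrite modn_small //; lia.
have km : ((j * m + k) %% m = k)%N by rewrite modnMDl modn_small.
rewrite /arr_expand /arr_of_seq km {km}.
case: j lt_j2 => [|[|//]] _; rewrite ?mul0n ?mul1n ?add0n; last rewrite -modnDm;
  case: m4 => ->; case: k4 => [|[|[|]]] -> /=.
all: by rewrite ?mul0n ?mul1n ?addn0 ?add0n ?k2m ?km2m ?expr0 ?expr1 ?mul1r ?mulN1r ?opprK // addnC.
Qed.

Lemma arr_of_seq_diag (phi : nat -> int) (x : nat) :
  arr_expand m (arr_of_seq m phi) x x = seq_expand m phi x.
Proof.
rewrite -arr_expand_diag_mod /seq_expand.
have : (x %% (4 * m) < 4 * m)%N by rewrite ltn_pmod ?muln_gt0.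
move: (x %% (4 * m))%N => y lt_y4m.
case: (ltnP y (2 * m)) => hy; first exact: arr_of_seq_diag_small.
by rewrite -(subnK hy) arr_expand_diag_add2m arr_of_seq_diag_small ?addnK //; lia.
Qed.

Lemma eq_mod4_modm (b c : nat) : (b < 4 * m)%N -> (c < 4 * m)%N ->
  (b %% 4 = c %% 4)%N -> (b %% m = c %% m)%N -> b = c.
Proof.
move=> lt_b lt_c e4 em.
have co4m : coprime 4 m by rewrite (_ : 4 = 2 ^ 2)%N // coprime_pexpl // coprime2n.
by have /eqP := chinese_remainder co4m b c; rewrite e4 em !eqxx !modn_small.
Qed.

Definition crt_split (b : 'I_(4 * m)) : 'I_4 * 'I_m :=
  (Ordinal (ltn_pmod b (isT : (0 < 4)%N)), Ordinal (ltn_pmod b m_gt0)).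

Lemma crt_split_bij : bijective crt_split.
Proof.
apply: inj_card_bij; last by rewrite card_prod !card_ord.
move=> b c /(congr1 (fun x => (val x.1, val x.2))) [e4 em].
by apply: val_inj; exact: eq_mod4_modm (ltn_ord b) (ltn_ord c) e4 em.
Qed.

Lemma crt_split_eq0 (b : 'I_(4 * m)) :
  ((b %% 4 == 0) && (b %% m == 0))%N = (b == 0 :> nat).
Proof.
apply/andP/eqP => [[/eqP e4 /eqP em] | ->]; last by rewrite !mod0n.
by apply: eq_mod4_modm; rewrite ?e4 ?em ?mod0n ?muln_gt0.
Qed.

Lemma crt_split_eq2m (b : 'I_(4 * m)) :
  ((b %% 4 == 2) && (b %% m == 0))%N = (b == 2 * m :> nat).
Proof.
have m4 : (2 * m %% 4 = 2)%N by have := modn2 m; rewrite m_odd; lia.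
apply/andP/eqP => [[/eqP e4 /eqP em] | ->]; last by rewrite m4 modnMl.
by apply: eq_mod4_modm; rewrite ?e4 ?em ?m4 ?modnMl ?ltn_pmul2r.
Qed.

Lemma forall_crt (P : nat -> nat -> Prop) :
  (forall (x1 : 'I_4) (x2 : 'I_m), P x1 x2) <-> (forall b : 'I_(4 * m), P (b %% 4)%N (b %% m)%N).
Proof.
split=> [hP b | hP x1 x2]; first exact: (hP (crt_split b).1 (crt_split b).2).
have [split_inv _ splitK] := crt_split_bij.
have /(congr1 (fun x => (nat_of_ord x.1, nat_of_ord x.2))) [<- <-] := splitK (x1, x2).
exact: hP.
Qed.

Lemma card_crt (P : nat -> nat -> bool) :
  #|[set x : 'I_4 * 'I_m | P x.1 x.2]| = #|[set b : 'I_(4 * m) | P (b %% 4)%N (b %% m)%N]|.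
Proof.
rewrite -!sum1_card (reindex crt_split (onW_bij _ crt_split_bij)).
by apply: eq_bigl => b; rewrite !inE.
Qed.

Lemma arr_autocorr_crt (f : nat -> nat -> int) (g : nat -> int) :
  (forall a k : nat, f (a %% 4)%N (k %% m)%N = f a k) -> (forall x, f x x = g x) ->
  forall b : 'I_(4 * m), arr_autocorr m f (b %% 4)%N (b %% m)%N = seq_autocorr m g b.
Proof.
move=> f_mod f_diag x.
have g_mod y : g (y %% (4 * m))%N = g y.
  by rewrite -!f_diag -f_mod modn_modMr modn_modMl f_mod.
rewrite /arr_autocorr /seq_autocorr pair_bigA.
rewrite (reindex crt_split (onW_bij _ crt_split_bij)); apply: eq_bigr => b _ /=.
by rewrite !modnDm !f_mod !f_diag g_mod.
Qed.
End OddLength.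

Lemma binary_arr_of_seq (m : nat) (phi : nat -> int) : (0 < m)%N ->
  binary_seq m phi -> binary_arr m (arr_of_seq m phi).
Proof.
move=> m_gt0 bin_phi a k _ _.
have pm1_phi i : pm1 (phi (i %% (2 * m)))%N by apply: bin_phi; rewrite ltn_pmod ?muln_gt0.
by rewrite /arr_of_seq; case: ifP => _; case: (k %% 4)%N => [|[|[|?]]]; rewrite ?pm1N ?pm1_signM.
Qed.

Theorem lemma1 (m : nat) (phi : nat -> int) :
  odd m -> (1 < m)%N -> binary_seq m phi ->
  (is_GOBS m phi <-> is_GOBA_10 m (arr_of_seq m phi)).
Proof.
move=> m_odd m_gt1 bin_phi; rewrite /is_GOBS /is_GOBA_10 /=.
set Ra := arr_autocorr m _; set Rs := seq_autocorr m _.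
have corr_crt : forall b : 'I_(4 * m), Ra (b %% 4)%N (b %% m)%N = Rs b :=
  arr_autocorr_crt m_odd (@arr_expand_modn m _) (arr_of_seq_diag m_odd phi).
have -> : #|[set x : 'I_4 * 'I_m | Ra x.1 x.2 == 0]| = #|[set b : 'I_(4 * m) | Rs b == 0]|.
  rewrite (card_crt m_odd (fun a k => Ra a k == 0)).
  by apply: eq_card => b; rewrite !inE corr_crt.
rewrite (forall_crt m_odd (fun a k => ~ (a == 0)%N && (k == 0)%N ->
  ~ (a == 2)%N && (k == 0)%N -> in_0_pm4 (Ra a k))) /=.
have bin_arr := binary_arr_of_seq (ltnW m_gt1) bin_phi.
split=> -[_ [off_peak ->]]; do !split => //.
- move=> b n0 n2; rewrite corr_crt; apply: off_peak; apply/negP.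
    by rewrite -(crt_split_eq0 m_odd).
  by rewrite -(crt_split_eq2m m_odd).
- move=> b n0 n2; rewrite -corr_crt; apply: off_peak.
    by rewrite (crt_split_eq0 m_odd); apply/negP.
  by rewrite (crt_split_eq2m m_odd); apply/negP.
Qed.
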